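(* There is an infinite family of undirected graphs (with positive edge lengths) such that, with $n$ the number of vertices, the weighted greedy algorithm w-HHL finds a hierarchical hub labeling of size $\Omega(n^{4/3})$ while the optimal hierarchical hub labeling has size $O(n)$.
   Context: For an undirected graph $G=(V,E)$ with edge lengths, $n=|V|$, a hub labeling assigns to each $v$ a label $L(v)\subseteq V$ such that for every pair $u,w$, $L(u)\cap L(w)$ contains a vertex on some shortest $u$–$w$ path; its size is $\sum_v|L(v)|$. It is hierarchical (HHL) if there is a bijection $\pi:V\to\{1,\dots,n\}$ with $u\in L(v)\Rightarrow\pi(u)\le\pi(v)$. w-HHL: start with empty labels; an unordered pair $[u,w]$ (including $u=w$) is uncovered if $L(u)\cap L(w)$ has no vertex on a shortest $u$–$w$ path. For each not-yet-selected vertex $v$, the center graph is the graph on $V$ with an edge (self-loop if $u=w$) $\{u,w\}$ for each uncovered pair having a shortest $u$–$w$ path through $v$, with isolated vertices deleted. Each iteration selects a not-yet-selected $v$ whose center graph has maximum density (edges divided by vertices) and adds $v$ to $L(u)$ for every vertex $u$ of that center graph, until all pairs are covered. *)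

From mathcomp Require Import all_boot all_order all_algebra.
From mathcomp Require Import boolp.
Set Implicit Arguments.
Unset Strict Implicit.
Unset Printing Implicit Defensive.
Import Order.TTheory GRing.Theory Num.Theory.
Local Open Scope ring_scope.

Record wgraph (n : nat) := WGraph {
  adj : rel 'I_n;
  wt  : 'I_n -> 'I_n -> rat  (* length of edge {u,v} (meaningful when adj u v) *)
}.

Definition wf_graph n (G : wgraph n) : Prop :=
  [/\ forall u v, adj G u v = adj G v u,
      forall u v, wt G u v = wt G v u,
      forall u, ~~ adj G u u
    & forall u v, adj G u v -> 0 < wt G u v].

Fixpoint plen n (G : wgraph n) (x : 'I_n) (p : seq 'I_n) : rat :=
  match p with
  | [::] => 0
  | y :: q => wt G x y + plen G y q
  end.

(* p is (the tail of) a walk from u to w in G. *)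
Definition walk n (G : wgraph n) (u w : 'I_n) (p : seq 'I_n) : Prop :=
  path (adj G) u p /\ last u p = w.

Definition connected_graph n (G : wgraph n) : Prop :=
  forall u w, exists p, walk G u w p.

Definition on_sp n (G : wgraph n) (u v w : 'I_n) : Prop :=
  exists p, [/\ walk G u w p, v \in u :: p &
                forall q, walk G u w q -> plen G u p <= plen G u q].

Definition labeling n := 'I_n -> {set 'I_n}.

Definition covered n (G : wgraph n) (L : labeling n) (u w : 'I_n) : Prop :=
  exists2 x, x \in L u :&: L w & on_sp G u x w.

Definition is_HL n (G : wgraph n) (L : labeling n) : Prop :=
  forall u w, covered G L u w.

Definition is_HHL n (G : wgraph n) (L : labeling n) : Prop :=
  is_HL G L /\
  exists pi : 'I_n -> 'I_n,
    bijective pi /\ forall u v, u \in L v -> (pi u <= pi v)%N.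

Definition hl_size n (L : labeling n) : nat := (\sum_(v : 'I_n) #|L v|)%N.

(* Center graph of v w.r.t. the current labels L: an edge {u,w} (a self-loop
   when u = w) for each uncovered pair having a shortest u--w path through v.
   Unordered pairs are represented by ordered pairs (u,w) with u <= w. *)
Definition cg_edges n (G : wgraph n) (L : labeling n) (v : 'I_n)
  : {set 'I_n * 'I_n} :=
  [set p : 'I_n * 'I_n | (p.1 <= p.2)%N && `[< ~ covered G L p.1 p.2 /\ on_sp G p.1 v p.2 >]].

(* Non-isolated vertices of the center graph. *)
Definition cg_verts n (G : wgraph n) (L : labeling n) (v : 'I_n) : {set 'I_n} :=
  [set u | `[< exists w, ~ covered G L u w /\ on_sp G u v w >]].

(* Density = #edges / #vertices (0 for the empty graph). *)
Definition cg_density n (G : wgraph n) (L : labeling n) (v : 'I_n) : rat :=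
  (#|cg_edges G L v|)%:R / (#|cg_verts G L v|)%:R.

Definition whhl_update n (G : wgraph n) (L : labeling n) (v : 'I_n)
  : labeling n :=
  fun u => if u \in cg_verts G L v then v |: L u else L u.

(* States (L, S) reachable by some execution of w-HHL
   (S = set of already selected vertices); ties are arbitrary. *)
Inductive whhl_reach n (G : wgraph n) : labeling n -> {set 'I_n} -> Prop :=
| whhl_start : whhl_reach G (fun _ => set0) set0
| whhl_step (L : labeling n) (S : {set 'I_n}) (v : 'I_n) :
    whhl_reach G L S ->
    ~ is_HL G L ->
    v \notin S ->
    (forall v', v' \notin S -> cg_density G L v' <= cg_density G L v) ->
    whhl_reach G (whhl_update G L v) (v |: S).

Definition whhl_output n (G : wgraph n) (L : labeling n) : Prop :=
  exists S, whhl_reach G L S /\ is_HL G L.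

(* The graph has a vertex [top], a vertex [mid], [k] gates and [k] cores of
   [m = 16 k^2] vertices each, core [j] hanging from gate [j], so [n ~ 16 k^3].
   Shortest paths inside a core go through its gate, between different cores
   through [top], and from a gate to another gate or to a foreign core through
   [mid]: the labels
   [{v, top, mid, gate of v}] form a hierarchical labeling of size [<= 4 n].
   The greedy algorithm first selects [top], whose center graph contains all
   cross-core pairs.  Afterwards, as long as some gate is unselected, its center
   graph still contains the [m^2 / 4] pairs across the halves of its core on at
   most [n] vertices, while every non-gate candidate has density [O(k)]; so all
   gates are selected next.  Selecting gate [j] adds it to the labels of all
   [k m] core vertices, because the pair of a core vertex and gate [j] can only
   be covered by one of them or [mid].  Hence the output has size
   [>= k^2 m = 16 k^4], which is [Omega(n^(4/3))]. *)

From mathcomp Require Import all_boot all_order all_algebra.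
From mathcomp Require Import boolp lra zify.
Set Implicit Arguments.
Unset Strict Implicit.
Unset Printing Implicit Defensive.
Import Order.TTheory GRing.Theory Num.Theory.
Local Open Scope ring_scope.

Section Walks.
Variables (n : nat) (G : wgraph n).

Lemma plen_cat (u : 'I_n) p q :
  plen G u (p ++ q) = plen G u p + plen G (last u p) q.
Proof. by elim: p u => [|x p IHp] u /=; rewrite ?add0r // IHp addrA. Qed.

Lemma walk_cat (u v w : 'I_n) p q :
  walk G u v p -> walk G v w q -> walk G u w (p ++ q).
Proof.
case=> pP <- [qP <-]; split; first by rewrite cat_path pP.
by rewrite last_cat.
Qed.

Lemma walk_split (u w v : 'I_n) p : walk G u w p -> v \in u :: p ->
  exists p1 p2, [/\ walk G u v p1, walk G v w p2 &
                    plen G u p = plen G u p1 + plen G v p2].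
Proof.
case=> pP pL; rewrite in_cons => /predU1P[->|vp].
  by exists [::], p; split; rewrite //= add0r.
move: pP pL; case/path.splitP: vp => p1 p2.
rewrite cat_path last_cat !last_rcons => /andP[p1P p2P] p2L.
exists (rcons p1 v), p2; split => //; first by rewrite /walk last_rcons.
by rewrite plen_cat last_rcons.
Qed.

End Walks.

Section MetricGraph.
Variables (n : nat) (G : wgraph n) (d : 'I_n -> 'I_n -> rat).
Hypothesis d_triangle : forall u v w, d u w <= d u v + d v w.
Hypothesis d_sym : forall u v, d u v = d v u.
Hypothesis d_refl : forall u, d u u = 0.
Hypothesis d_le_wt : forall u v, adj G u v -> d u v <= wt G u v.
Hypothesis d_realized : forall u w, exists2 p, walk G u w p & plen G u p = d u w.

Lemma d_le_plen (u w : 'I_n) p : walk G u w p -> d u w <= plen G u p.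
Proof.
elim: p u => [|x p IHp] u [/= pP pL]; first by rewrite -pL d_refl.
case/andP: pP => ux pP; have := IHp x (conj pP pL).
by have := d_triangle u x w; have := d_le_wt ux; lra.
Qed.

Lemma on_spE (u v w : 'I_n) : on_sp G u v w <-> d u v + d v w = d u w.
Proof.
split=> [[p [pW vp pmin]]|duvw].
  have [p1 [p2 [p1W p2W plenE]]] := walk_split pW vp.
  have [q qW qL] := d_realized u w; have := pmin q qW; rewrite plenE qL.
  by have := d_le_plen p1W; have := d_le_plen p2W; have := d_triangle u v w; lra.
have [p1 p1W p1L] := d_realized u v; have [p2 p2W p2L] := d_realized v w.
exists (p1 ++ p2); split; first exact: walk_cat p1W p2W.
  by case: p1W => _ <-; rewrite -cat_cons mem_cat mem_last.
move=> q /d_le_plen; rewrite plen_cat.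
by case: p1W => _ ->; rewrite p1L p2L duvw.
Qed.

Lemma on_sp_sym (u v w : 'I_n) : on_sp G u v w -> on_sp G w v u.
Proof. by rewrite !on_spE (d_sym w) (d_sym v u) (d_sym w u) addrC. Qed.

Lemma on_sp_source (u w : 'I_n) : on_sp G u u w.
Proof. by rewrite on_spE d_refl add0r. Qed.

Lemma on_sp_target (u w : 'I_n) : on_sp G u w w.
Proof. by rewrite on_spE d_refl addr0. Qed.

Lemma metric_graph_connected : connected_graph G.
Proof. by move=> u w; have [p pW _] := d_realized u w; exists p. Qed.

End MetricGraph.

Section Greedy.
Variables (n : nat) (G : wgraph n).
Hypothesis sp_sym : forall u v w : 'I_n, on_sp G u v w -> on_sp G w v u.
Hypothesis sp_source : forall u w : 'I_n, on_sp G u u w.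

Lemma covered_sym L (u w : 'I_n) : covered G L u w -> covered G L w u.
Proof. by case=> x xL xP; exists x; [rewrite setIC | exact: sp_sym]. Qed.

Lemma covered_subset (L L' : labeling n) (u w : 'I_n) :
  (forall z, L z \subset L' z) -> covered G L u w -> covered G L' u w.
Proof.
move=> LL' [x /setIP[xu xw] xP]; exists x => //.
by rewrite inE (subsetP (LL' u)) ?(subsetP (LL' w)).
Qed.

Lemma mem_cg_verts L v u :
  u \in cg_verts G L v <-> exists w, ~ covered G L u w /\ on_sp G u v w.
Proof. by rewrite inE; split=> /asboolP. Qed.

Lemma mem_cg_edges L v (p : 'I_n * 'I_n) : p \in cg_edges G L v <->
  [/\ (p.1 <= p.2)%N, ~ covered G L p.1 p.2 & on_sp G p.1 v p.2].
Proof.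
rewrite inE; split=> [/andP[le /asboolP[]] //|[le nc sp]].
by rewrite le; apply/asboolP.
Qed.

Lemma cg_edges_verts L v (p : 'I_n * 'I_n) : p \in cg_edges G L v ->
  p.1 \in cg_verts G L v /\ p.2 \in cg_verts G L v.
Proof.
case/mem_cg_edges=> _ nc sp; split; apply/mem_cg_verts; first by exists p.2.
by exists p.1; split=> [/covered_sym|]; last exact: sp_sym.
Qed.

(* Each step selects a fresh vertex [v] and covers exactly the pairs having a
   shortest path through [v], so the covered pairs are determined by [S]. *)
Definition whhl_inv (L : labeling n) (S : {set 'I_n}) :=
  (forall u, L u \subset S) /\
  (forall u w, covered G L u w <-> exists2 x, x \in S & on_sp G u x w).

Lemma whhl_reach_inv L S : whhl_reach G L S -> whhl_inv L S.
Proof.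
elim=> [|{}L {}S v _ [LS coverE] _ _ _].
  by split=> [u|u w]; [rewrite sub0set | split=> [[x]|[x]]; rewrite ?inE].
have LL' z : L z \subset whhl_update G L v z.
  by rewrite /whhl_update; case: ifP => // _; apply: subsetU1.
split=> [u|u w].
  rewrite /whhl_update; case: ifP => _; first exact: setUS.
  exact: subset_trans (LS u) (subsetU1 _ _).
split=> [[x /setIP[xu _] xP]|[x /setU1P[->|xS] xP]]; last first.
- by apply: covered_subset LL' _; apply/coverE; exists x.
- have [/(covered_subset LL')|nc] := pselect (covered G L u w) => //.
  have uV : u \in cg_verts G L v by apply/mem_cg_verts; exists w.
  have wV : w \in cg_verts G L v.
    by apply/mem_cg_verts; exists u; split=> [/covered_sym|]; last exact: sp_sym.
  by exists v => //; rewrite /whhl_update uV wV inE !setU11.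
- exists x => //; move: xu; rewrite /whhl_update; case: ifP => _.
    by apply/subsetP; apply: setUS.
  by apply/subsetP; apply: subset_trans (LS u) (subsetU1 _ _).
Qed.

Lemma hl_size_whhl_update L S v : whhl_inv L S -> v \notin S ->
  hl_size (whhl_update G L v) = (hl_size L + #|cg_verts G L v|)%N.
Proof.
case=> LS _ vS; rewrite /hl_size /whhl_update -sum1_card.
rewrite [X in _ = (_ + X)%N]big_mkcond -big_split /=.
apply: eq_bigr => u _; case: ifP => _; last by rewrite addn0.
have vLu : v \notin L u by apply: contra vS; apply: (subsetP (LS u)).
by rewrite cardsU1 vLu addnC.
Qed.

Lemma covered_selected L S (u x w : 'I_n) :
  whhl_inv L S -> x \in S -> on_sp G u x w -> covered G L u w.
Proof. by case=> _ coverE xS xP; apply/coverE; exists x. Qed.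

(* The greedy choice always exists, and after at most [n] steps every vertex
   is selected, hence every pair is covered. *)
Lemma whhl_output_exists : exists L, whhl_output G L.
Proof.
suff out r L S : whhl_reach G L S -> (n - #|S| <= r)%N -> exists L', whhl_output G L'.
  by apply: (out n _ _ (whhl_start G)); rewrite cards0 subn0.
elim: r L S => [|r IHr] L S LSr sizeS.
  exists L, S; split => // u w; apply: covered_selected (whhl_reach_inv LSr) _ (sp_source u w).
  have -> : S = setT by apply/eqP; rewrite eqEcard subsetT cardsT card_ord; lia.
  by rewrite inE.
have [HL|notHL] := pselect (is_HL G L); first by exists L, S.
have [v0 v0S] : exists v0, v0 \notin S.
  apply: contra_notP notHL => allS u w.
  apply: covered_selected (whhl_reach_inv LSr) _ (sp_source u w).
  by apply: contra_notT allS => uS; exists u.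
case: (@arg_maxP _ _ _ v0 [pred x | x \notin S] (cg_density G L) v0S) => v vS vmax.
apply: IHr _ _ (whhl_step LSr notHL vS vmax) _.
by rewrite cardsU1 (negbTE vS); lia.
Qed.

Lemma card_cg_edges_le L v (A : {set 'I_n}) (Q : {set 'I_n * 'I_n}) :
  (forall p, p \in cg_edges G L v -> [\/ p.1 \in A, p.2 \in A | p \in Q]) ->
  (#|cg_edges G L v| <= 2 * #|A| * #|cg_verts G L v| + #|Q|)%N.
Proof.
move=> Ecover; set V := cg_verts G L v.
have sub : cg_edges G L v \subset (setX A V :|: setX V A) :|: Q.
  apply/subsetP => -[a b] abE; have [/= aV bV] := cg_edges_verts abE.
  by rewrite !in_setU !in_setX aV bV; case: (Ecover _ abE) => /= ->; rewrite ?orbT.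
apply: leq_trans (subset_leq_card sub) _; rewrite cardsU.
apply: leq_trans (leq_subr _ _) _; rewrite leq_add2r cardsU.
apply: leq_trans (leq_subr _ _) _.
by rewrite !cardsX (mulnC #|V|) -mulnA mul2n -addnn.
Qed.

Lemma cg_verts_gt0 L v : (0 < #|cg_edges G L v|)%N -> (0 < #|cg_verts G L v|)%N.
Proof.
case/card_gt0P => p /cg_edges_verts[pV _].
by apply/card_gt0P; exists p.1.
Qed.

Lemma cg_density_lt L v v' :
  (0 < #|cg_verts G L v|)%N -> (0 < #|cg_verts G L v'|)%N ->
  (#|cg_edges G L v| * #|cg_verts G L v'| < #|cg_edges G L v'| * #|cg_verts G L v|)%N ->
  cg_density G L v < cg_density G L v'.
Proof.
move=> Vv Vv' lt; rewrite /cg_density ltr_pdivrMr ?ltr0n //.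
by rewrite mulrAC ltr_pdivlMr ?ltr0n // -!natrM ltr_nat.
Qed.

End Greedy.

Inductive kind := Top | Mid | Gate of nat | Core of nat.

Definition kadj (a b : kind) : bool :=
  match a, b with
  | Top, Mid | Mid, Top | Top, Core _ | Core _, Top | Mid, Gate _ | Gate _, Mid
  | Mid, Core _ | Core _, Mid => true
  | Gate i, Core j | Core j, Gate i => i == j
  | _, _ => false
  end.

(* Distance between two distinct vertices of the given kinds; two vertices of
   the same core are joined through its gate. *)
Definition kdist (a b : kind) : rat :=
  match a, b with
  | Top, Top | Mid, Mid => 0
  | Top, Mid | Mid, Top | Top, Core _ | Core _, Top => 8
  | Top, Gate _ | Gate _, Top => 12
  | Mid, Gate _ | Gate _, Mid => 6
  | Mid, Core _ | Core _, Mid => 9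
  | Gate i, Gate j => if i == j then 0 else 12
  | Gate i, Core j | Core j, Gate i => if i == j then 4 else 15
  | Core i, Core j => if i == j then 8 else 16
  end.

Definition kvia (a b : kind) : kind :=
  match a, b with
  | Top, Gate j | Gate j, Top => Core j
  | Core i, Core j => if i == j then Gate i else Top
  | _, _ => Mid
  end.

Definition kdistinct (a b : kind) : bool :=
  match a, b with Top, Top | Mid, Mid => false | Gate i, Gate j => i != j | _, _ => true end.

Definition is_gate (a : kind) : bool := if a is Gate _ then true else false.

Ltac kind_cases :=
  repeat (rewrite ?eqxx;
          match goal with |- context [?i == ?j] => case: (i =P j) => [?|?]; subst end);
  rewrite ?eqxx.

Ltac kind_close := move=> *;
  solve [ match goal with H : @eq rat _ _ |- _ => exfalso; move: H; clear; lra end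
        | done | by left | by right
        | match goal with H : ?x <> ?x |- _ => by case: H end
        | match goal with |- is_true _ => lra end ].

Ltac kinds a := case: a => [||?|?].

Lemma kdist_sym a b : kdist a b = kdist b a.
Proof. by kinds a; kinds b; rewrite //= eq_sym. Qed.

Lemma kadj_sym a b : kadj a b = kadj b a.
Proof. by kinds a; kinds b; rewrite //= eq_sym. Qed.

Lemma kdist_triangle a b c : kdist a c <= kdist a b + kdist b c.
Proof. kinds a; kinds b; kinds c; rewrite /=; kind_cases; kind_close. Qed.

Lemma kdist_ge0 a b : 0 <= kdist a b.
Proof. kinds a; kinds b; rewrite /=; kind_cases; kind_close. Qed.

Lemma kdist_gt0 a b : kdistinct a b -> 0 < kdist a b.
Proof. kinds a; kinds b; rewrite //=; kind_cases; kind_close. Qed.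

Lemma kadj_kdistinct a b : kadj a b -> kdistinct a b /\ a <> b.
Proof. by kinds a; kinds b; rewrite //=; kind_cases. Qed.

Lemma kviaP a b : kdistinct a b -> ~~ kadj a b ->
  [/\ kadj a (kvia a b), kadj (kvia a b) b & kdist a (kvia a b) + kdist (kvia a b) b = kdist a b].
Proof. kinds a; kinds b; rewrite //=; kind_cases; rewrite //= ?eqxx; kind_close. Qed.

Lemma kbetween_core_core j c :
  kdist (Core j) c + kdist c (Core j) = kdist (Core j) (Core j) -> c = Gate j.
Proof. kinds c; rewrite /=; kind_cases; kind_close. Qed.

Lemma kbetween_core_gate i j c :
  kdist (Core i) c + kdist c (Gate j) = kdist (Core i) (Gate j) -> c <> Gate j -> c = Mid.
Proof. kinds c; rewrite /=; kind_cases; kind_close. Qed.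

Lemma kbetween_mid a b : kdist a Mid + kdist Mid b = kdist a b -> a <> Mid -> b <> Mid ->
  is_gate a || is_gate b.
Proof. kinds a; kinds b; rewrite /=; kind_cases; kind_close. Qed.

Lemma kbetween_gate j a b : kdist a (Gate j) + kdist (Gate j) b = kdist a b ->
  a <> Gate j -> b <> Gate j -> a = Core j /\ b = Core j.
Proof. kinds a; kinds b; rewrite /=; kind_cases; kind_close. Qed.

Lemma kbetween_core j a b : kdist a (Core j) + kdist (Core j) b = kdist a b ->
  a = Top \/ b = Top.
Proof. kinds a; kinds b; rewrite /=; kind_cases; kind_close. Qed.

Lemma leq_card_into (T T' : finType) (f : T -> T') (A : {set T'}) :
  injective f -> (forall x, f x \in A) -> (#|T| <= #|A|)%N.
Proof.
move=> fI fA; rewrite -cardsT -(card_imset _ fI); apply: subset_leq_card.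
by apply/subsetP => _ /imsetP[x _ ->].
Qed.

Section Construction.
Variables k h : nat.
Hypothesis k_ge3 : (2 < k)%N.

(* [k] cores of [m] vertices each, after the vertices [0] (top), [1] (mid)
   and the [k] gates [2, ..., k + 1]. *)
Local Notation m := (2 * h)%N.
Local Notation n := (k + k * m).+2.

Hypothesis h_large : (2 * (k + 1) * n < h * h)%N.

Lemma h_gt0 : (0 < h)%N.
Proof. by case: h h_large; rewrite ?muln0. Qed.

Definition vkind (i : nat) : kind :=
  if i == 0%N then Top else if i == 1%N then Mid
  else if (i < k.+2)%N then Gate (i - 2) else Core ((i - k.+2) %/ m).

Definition kind_ok (a : kind) : bool :=
  match a with Gate j | Core j => (j < k)%N | _ => true end.

Definition kvertex (a : kind) : 'I_n :=
  match a with
  | Top => inord 0 | Mid => inord 1 | Gate j => inord j.+2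
  | Core j => inord (k.+2 + j * m)
  end.

Definition top := kvertex Top.
Definition mid := kvertex Mid.
Definition gate j := kvertex (Gate j).
Definition core j r : 'I_n := inord (k.+2 + j * m + r).

Lemma core_bound j r : (j < k)%N -> (r < m)%N -> (k.+2 + j * m + r < n)%N.
Proof.
move=> jk rm; have : (j.+1 * m <= k * m)%N by rewrite leq_mul2r jk orbT.
by rewrite mulSn; lia.
Qed.

Lemma val_core j r : (j < k)%N -> (r < m)%N -> core j r = (k.+2 + j * m + r)%N :> nat.
Proof. by move=> jk rm; rewrite inordK ?core_bound. Qed.

Lemma vkind_coreE (i : nat) : (k.+2 <= i)%N -> vkind i = Core ((i - k.+2) %/ m).
Proof. by move=> ki; rewrite /vkind ifN_eq ?ifN_eq ?ltnNge ?ki //; lia. Qed.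

Lemma vkind_core j r : (j < k)%N -> (r < m)%N -> vkind (core j r) = Core j.
Proof.
move=> jk rm; rewrite val_core // vkind_coreE; last by lia.
by rewrite -addnA addKn divnMDl ?divn_small ?addn0 // muln_gt0 h_gt0.
Qed.

Lemma vkind_kvertex a : kind_ok a -> vkind (kvertex a) = a.
Proof.
case: a => [||j|j] //= jk; try by rewrite /vkind inordK.
  by rewrite /vkind inordK /= ?ltnS ?jk ?subn2 //; lia.
have m_gt0 : (0 < m)%N by rewrite muln_gt0 h_gt0.
by have := vkind_core jk m_gt0; rewrite /core addn0.
Qed.

Lemma vkind_ok (u : 'I_n) : kind_ok (vkind u).
Proof.
have := ltn_ord u; rewrite /vkind; do 2!case: ifP => // _.
case: ifP => /= [|/negbT]; first by lia.
rewrite -leqNgt ltn_divLR ?muln_gt0 ?h_gt0 //; lia.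
Qed.

Lemma kvertex_vkind (u : 'I_n) : (u < k.+2)%N -> kvertex (vkind u) = u.
Proof.
move=> uk; apply: ord_inj; rewrite /vkind.
case: eqP => [u0|u0]; first by rewrite u0 /= inordK.
case: eqP => [u1|u1]; first by rewrite u1 /= inordK.
by rewrite uk /= inordK; lia.
Qed.

Lemma vkind_noncore_lt (u : 'I_n) a : vkind u = a -> (forall j, a <> Core j) -> (u < k.+2)%N.
Proof. by move=> <- nc; rewrite ltnNge; apply/negP => /vkind_coreE; apply: nc. Qed.

Lemma vkind_eq_top (u : 'I_n) : vkind u = Top -> u = top.
Proof. by move=> uT; rewrite /top -uT kvertex_vkind // (vkind_noncore_lt uT). Qed.

Lemma vkind_eq_mid (u : 'I_n) : vkind u = Mid -> u = mid.
Proof. by move=> uM; rewrite /mid -uM kvertex_vkind // (vkind_noncore_lt uM). Qed.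

Lemma vkind_eq_gate (u : 'I_n) j : vkind u = Gate j -> u = gate j.
Proof. by move=> uG; rewrite /gate -uG kvertex_vkind // (vkind_noncore_lt uG). Qed.

Lemma vkind_neq (u v : 'I_n) : vkind u <> vkind v -> u != v.
Proof. by apply: contra_notN => /eqP ->. Qed.

Lemma vkind_kdistinct (u w : 'I_n) : u != w -> kdistinct (vkind u) (vkind w).
Proof.
apply: contraR; case Eu: (vkind u) => [||i|i]; case Ew: (vkind w) => [||j|j] //=.
- by rewrite (vkind_eq_top Eu) (vkind_eq_top Ew).
- by rewrite (vkind_eq_mid Eu) (vkind_eq_mid Ew).
- by move/negPn/eqP => ij; rewrite (vkind_eq_gate Eu) (vkind_eq_gate Ew) ij.
Qed.

Definition dist (u v : 'I_n) : rat := if u == v then 0 else kdist (vkind u) (vkind v).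

Definition gap_graph : wgraph n :=
  WGraph (fun u v : 'I_n => kadj (vkind u) (vkind v)) dist.

Lemma distE (u v : 'I_n) : u != v -> dist u v = kdist (vkind u) (vkind v).
Proof. by rewrite /dist => /negbTE ->. Qed.

Lemma dist_sym (u v : 'I_n) : dist u v = dist v u.
Proof. by rewrite /dist eq_sym kdist_sym. Qed.

Lemma dist_triangle (u v w : 'I_n) : dist u w <= dist u v + dist v w.
Proof.
rewrite /dist; have := kdist_ge0 (vkind u) (vkind v); have := kdist_ge0 (vkind v) (vkind w).
have [<-|uw] := eqVneq u w; first by rewrite [v == u]eq_sym; case: (u == v); lra.
have [<-|uv] := eqVneq u v; first by rewrite (negbTE uw); lra.
have [<-|vw] := eqVneq v w; first lra.
by move=> _ _; apply: kdist_triangle.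
Qed.

Lemma gap_graph_wf : wf_graph gap_graph.
Proof.
split=> [u v|u v|u|u v /= uv] /=; [exact: kadj_sym | exact: dist_sym | |].
  by apply/negP => /kadj_kdistinct[].
have [uvD uvK] := kadj_kdistinct uv.
by rewrite distE ?kdist_gt0 ?vkind_neq.
Qed.

Lemma kind_ok_kvia a b : kind_ok a -> kind_ok b -> kind_ok (kvia a b).
Proof. by case: a => [||i|i]; case: b => [||j|j] //=; case: ifP. Qed.

Lemma dist_realized (u w : 'I_n) :
  exists2 p, walk gap_graph u w p & plen gap_graph u p = dist u w.
Proof.
have [<-|uw] := eqVneq u w; first by exists [::]; rewrite /= /dist ?eqxx.
case uwA: (kadj (vkind u) (vkind w)).
  by exists [:: w]; rewrite /walk /= ?uwA ?addr0.
set x := kvertex (kvia (vkind u) (vkind w)).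
have [ux xw uxw] := kviaP (vkind_kdistinct uw) (negbT uwA).
have xK : vkind x = kvia (vkind u) (vkind w) by rewrite vkind_kvertex ?kind_ok_kvia ?vkind_ok.
exists [:: x; w]; first by rewrite /walk /= xK ux xw.
have ux' : u != x by apply: vkind_neq; rewrite xK; case: (kadj_kdistinct ux).
have xw' : x != w by apply: vkind_neq; rewrite xK; case: (kadj_kdistinct xw).
by rewrite /= addr0 !distE // xK.
Qed.

Lemma dist_refl (u : 'I_n) : dist u u = 0.
Proof. by rewrite /dist eqxx. Qed.

Lemma dist_le_wt (u v : 'I_n) : adj gap_graph u v -> dist u v <= wt gap_graph u v.
Proof. by rewrite lexx. Qed.

Lemma on_sp_gapE (u v w : 'I_n) :
  on_sp gap_graph u v w <-> dist u v + dist v w = dist u w.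
Proof. exact: (on_spE dist_triangle dist_refl dist_le_wt dist_realized). Qed.

Lemma on_sp_gap_sym (u v w : 'I_n) : on_sp gap_graph u v w -> on_sp gap_graph w v u.
Proof. exact: (on_sp_sym dist_triangle dist_sym dist_refl dist_le_wt dist_realized). Qed.

Lemma on_sp_gap_source (u w : 'I_n) : on_sp gap_graph u u w.
Proof. exact: (on_sp_source dist_triangle dist_refl dist_le_wt dist_realized). Qed.

Lemma on_sp_gap_target (u w : 'I_n) : on_sp gap_graph u w w.
Proof. exact: (on_sp_target dist_triangle dist_refl dist_le_wt dist_realized). Qed.

Lemma gap_graph_connected : connected_graph gap_graph.
Proof. exact: metric_graph_connected dist_realized. Qed.

Lemma vkindT : vkind top = Top. Proof. exact: vkind_kvertex. Qed.
Lemma vkindM : vkind mid = Mid. Proof. exact: vkind_kvertex. Qed.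
Lemma vkindG j : (j < k)%N -> vkind (gate j) = Gate j. Proof. exact: (@vkind_kvertex (Gate j)). Qed.

Lemma on_sp_inner (u v w : 'I_n) : on_sp gap_graph u v w -> u != v -> v != w ->
  kdist (vkind u) (vkind v) + kdist (vkind v) (vkind w) = kdist (vkind u) (vkind w).
Proof.
move=> /on_sp_gapE + uv vw; rewrite /dist (negbTE uv) (negbTE vw).
case: eqP => [uw|//]; subst w.
have := kdist_gt0 (vkind_kdistinct uv); have := kdist_gt0 (vkind_kdistinct vw); lra.
Qed.

Lemma on_sp_core_pair (x y s : 'I_n) j : vkind x = Core j -> vkind y = Core j ->
  x != y -> on_sp gap_graph x s y -> [\/ s = x, s = y | s = gate j].
Proof.
move=> xC yC xy sP.
have [<-|xs] := eqVneq x s; first exact: Or31.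
have [->|sy] := eqVneq s y; first exact: Or32.
have := on_sp_inner sP xs sy; rewrite xC yC => /kbetween_core_core sG.
by apply: Or33; apply: vkind_eq_gate.
Qed.

Lemma on_sp_core_gate (u s : 'I_n) i j : (j < k)%N -> vkind u = Core i ->
  on_sp gap_graph u s (gate j) -> [\/ s = u, s = gate j | s = mid].
Proof.
move=> jk uC sP.
have [<-|us] := eqVneq u s; first exact: Or31.
have [->|sg] := eqVneq s (gate j); first exact: Or32.
have := on_sp_inner sP us sg; rewrite uC vkindG // => /kbetween_core_gate sM.
apply/Or33/vkind_eq_mid/sM => /vkind_eq_gate sG.
by rewrite sG eqxx in sg.
Qed.

Lemma on_sp_mid (u w : 'I_n) : on_sp gap_graph u mid w ->
  [\/ u = mid, w = mid | is_gate (vkind u) || is_gate (vkind w)].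
Proof.
move=> mP.
have [->|um] := eqVneq u mid; first exact: Or31.
have [<-|mw] := eqVneq mid w; first exact: Or32.
have := on_sp_inner mP um mw; rewrite vkindM => /kbetween_mid gates; apply/Or33/gates.
- by move/vkind_eq_mid => uM; rewrite uM eqxx in um.
- by move/vkind_eq_mid => wM; rewrite wM eqxx in mw.
Qed.

Lemma on_sp_gate (u w : 'I_n) j : (j < k)%N -> on_sp gap_graph u (gate j) w ->
  [\/ u = gate j, w = gate j | vkind u = Core j /\ vkind w = Core j].
Proof.
move=> jk gP.
have [->|ug] := eqVneq u (gate j); first exact: Or31.
have [<-|gw] := eqVneq (gate j) w; first exact: Or32.
have := on_sp_inner gP ug gw; rewrite vkindG // => /kbetween_gate cores; apply/Or33/cores.
- by move/vkind_eq_gate => uG; rewrite uG eqxx in ug.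
- by move/vkind_eq_gate => wG; rewrite wG eqxx in gw.
Qed.

Lemma on_sp_core (u v w : 'I_n) j : vkind v = Core j -> on_sp gap_graph u v w ->
  [\/ u = v, w = v, u = top | w = top].
Proof.
move=> vC vP.
have [->|uv] := eqVneq u v; first exact: Or41.
have [<-|vw] := eqVneq v w; first exact: Or42.
have := on_sp_inner vP uv vw; rewrite vC => /kbetween_core[/vkind_eq_top|/vkind_eq_top] ->.
- exact: Or43.
- exact: Or44.
Qed.

Lemma top_on_sp_cores (x y : 'I_n) i j : vkind x = Core i -> vkind y = Core j -> i != j ->
  on_sp gap_graph x top y.
Proof.
move=> xC yC ij; apply/on_sp_gapE.
have xt : x != top by apply: vkind_neq; rewrite xC vkindT.
have ty : top != y by apply: vkind_neq; rewrite yC vkindT.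
have xy : x != y by apply: vkind_neq; rewrite xC yC => -[/eqP]; rewrite (negbTE ij).
by rewrite !distE // xC yC vkindT /= (negbTE ij); lra.
Qed.

Lemma gate_on_sp_core (x y : 'I_n) j : (j < k)%N -> vkind x = Core j -> vkind y = Core j ->
  x != y -> on_sp gap_graph x (gate j) y.
Proof.
move=> jk xC yC xy; apply/on_sp_gapE.
have xg : x != gate j by apply: vkind_neq; rewrite xC vkindG.
have gy : gate j != y by apply: vkind_neq; rewrite yC vkindG.
by rewrite !distE // xC yC vkindG //= eqxx; lra.
Qed.

Lemma mid_on_sp_core_gate (x : 'I_n) i j : (j < k)%N -> vkind x = Core i -> i != j ->
  on_sp gap_graph x mid (gate j).
Proof.
move=> jk xC ij; apply/on_sp_gapE.
have xm : x != mid by apply: vkind_neq; rewrite xC vkindM.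
have mg : mid != gate j by apply: vkind_neq; rewrite vkindM vkindG.
have xg : x != gate j by apply: vkind_neq; rewrite xC vkindG.
by rewrite !distE // xC vkindM vkindG //= eq_sym (negbTE ij); lra.
Qed.

Lemma mid_on_sp_gates i j : (i < k)%N -> (j < k)%N -> i != j ->
  on_sp gap_graph (gate i) mid (gate j).
Proof.
move=> ik jk ij; apply/on_sp_gapE.
have gm : gate i != mid by apply: vkind_neq; rewrite vkindM vkindG.
have mg : mid != gate j by apply: vkind_neq; rewrite vkindM vkindG.
have gg : gate i != gate j by apply: vkind_neq; rewrite !vkindG // => -[/eqP]; rewrite (negbTE ij).
by rewrite !distE // vkindM !vkindG //= (negbTE ij); lra.
Qed.

Lemma core_inj j j' r r' : (j < k)%N -> (j' < k)%N -> (r < m)%N -> (r' < m)%N ->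
  core j r = core j' r' -> j = j' /\ r = r'.
Proof.
move=> jk j'k rm r'm e.
have [jj'] : Core j = Core j' by rewrite -(vkind_core jk rm) -(vkind_core j'k r'm) e.
subst j'; split=> //; move/(congr1 (@nat_of_ord _)): e; rewrite !val_core //; lia.
Qed.

Definition gates : {set 'I_n} := [set u : 'I_n | is_gate (vkind u)].

Lemma gatesP (u : 'I_n) : reflect (exists2 j, (j < k)%N & u = gate j) (u \in gates).
Proof.
rewrite inE; apply: (iffP idP) => [|[j jk ->]]; last by rewrite vkindG.
have := vkind_ok u; case uG: (vkind u) => [||j|] //= jk _.
by exists j; last exact: vkind_eq_gate.
Qed.

Lemma card_gates : #|gates| = k.
Proof.
apply/eqP; rewrite eqn_leq; apply/andP; split.
  have /subset_leq_card/leq_trans-> // : gates \subset [set gate (val j) | j : 'I_k].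
    by apply/subsetP => _ /gatesP[j jk ->]; apply/imsetP; exists (Ordinal jk).
  by rewrite (leq_trans (leq_imset_card _ _)) ?cardsT ?card_ord.
rewrite -[k in (k <= _)%N]card_ord; apply: (@leq_card_into _ _ (fun j : 'I_k => gate j)).
  move=> i j /(congr1 (fun u : 'I_n => vkind u)).
  by rewrite !vkindG ?ltn_ord // => -[]; apply: val_inj.
by move=> j; apply/gatesP; exists j.
Qed.

Lemma vkind_core_ge (u : 'I_n) j : vkind u = Core j -> (k.+2 <= u)%N.
Proof. by rewrite /vkind; do 3!case: ifP => //; rewrite ltnNge => /negbFE. Qed.

Definition cores j : {set 'I_n} := [set core j (val r) | r : 'I_m].

Lemma mem_cores (u : 'I_n) j : vkind u = Core j -> u \in cores j.
Proof.
move=> uC; have uk := vkind_core_ge uC.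
have m_gt0 : (0 < m)%N by rewrite muln_gt0 h_gt0.
apply/imsetP; exists (Ordinal (ltn_pmod (u - k.+2) m_gt0)) => //.
have [<-] : Core ((u - k.+2) %/ m) = Core j by rewrite -vkind_coreE.
by apply: ord_inj; rewrite /= inordK -addnA -divn_eq; have := ltn_ord u; lia.
Qed.

Lemma card_cores_le j : (#|cores j| <= m)%N.
Proof. by rewrite (leq_trans (leq_imset_card _ _)) ?cardsT ?card_ord. Qed.

Lemma card_cg_edges_mid L :
  (#|cg_edges gap_graph L mid| <= 2 * (k + 1) * #|cg_verts gap_graph L mid|)%N.
Proof.
apply: leq_trans (card_cg_edges_le on_sp_gap_sym (A := mid |: gates) (Q := set0) _) _.
  move=> p /mem_cg_edges[_ _ /on_sp_mid[->|->|/orP[pG|pG]]]; rewrite !inE ?eqxx ?pG ?orbT;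
    by [apply: Or31 | apply: Or32].
have A_le : (#|mid |: gates| <= k + 1)%N by rewrite cardsU1 card_gates addnC leq_add2l leq_b1.
by rewrite cards0 addn0 leq_mul2r leq_mul2l A_le !orbT.
Qed.

Lemma card_cg_edges_core L (v : 'I_n) j : vkind v = Core j ->
  (#|cg_edges gap_graph L v| <= 2 * 2 * #|cg_verts gap_graph L v|)%N.
Proof.
move=> vC.
apply: leq_trans (card_cg_edges_le on_sp_gap_sym (A := [set v; top]) (Q := set0) _) _.
  move=> p /mem_cg_edges[_ _ /(on_sp_core vC)[]->]; rewrite !inE eqxx ?orbT;
    by [apply: Or31 | apply: Or32].
by rewrite cards0 addn0 leq_mul2r leq_mul2l (leq_trans (leq_card_setU _ _)) ?cards1 ?orbT.
Qed.

Lemma card_cg_edges_gate L j : (j < k)%N ->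
  (#|cg_edges gap_graph L (gate j)| <= 2 * #|cg_verts gap_graph L (gate j)| + m * m)%N.
Proof.
move=> jk; set Q := setX (cores j) (cores j).
apply: leq_trans (card_cg_edges_le on_sp_gap_sym (A := [set gate j]) (Q := Q) _) _.
  move=> p /mem_cg_edges[_ _ /(on_sp_gate jk)[->|->|[/mem_cores p1C /mem_cores p2C]]].
  - by apply: Or31; rewrite inE.
  - by apply: Or32; rewrite inE.
  - by apply: Or33; rewrite inE p1C.
by rewrite cards1 muln1 cardsX leq_add2l leq_mul ?card_cores_le.
Qed.

Lemma card_cg_edges_nongate L (v : 'I_n) : v != top -> ~~ is_gate (vkind v) ->
  (#|cg_edges gap_graph L v| <= 2 * (k + 1) * #|cg_verts gap_graph L v|)%N.
Proof.
move=> vT; case vK: (vkind v) => [||//|j] _.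
- by rewrite (vkind_eq_top vK) eqxx in vT.
- by rewrite (vkind_eq_mid vK) card_cg_edges_mid.
- by apply: leq_trans (card_cg_edges_core L vK) _; rewrite leq_mul2r leq_mul2l; lia.
Qed.

Lemma not_covered_init L (u w : 'I_n) :
  whhl_inv gap_graph L set0 -> ~ covered gap_graph L u w.
Proof. by case=> _ coverE /coverE[x]; rewrite inE. Qed.

Lemma card_cg_verts_init L v : whhl_inv gap_graph L set0 -> #|cg_verts gap_graph L v| = n.
Proof.
move=> I0; suff -> : cg_verts gap_graph L v = setT by rewrite cardsT card_ord.
apply/setP => u; rewrite in_setT; apply/mem_cg_verts; exists v.
by split; [exact: not_covered_init | exact: on_sp_gap_target].
Qed.

(* Every pair of vertices in different cores has its shortest paths through [top];
   counting only the pairs between core [0] and cores [1], [2] suffices. *)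
Lemma card_cg_edges_top_init L : whhl_inv gap_graph L set0 ->
  (2 * (m * m) <= #|cg_edges gap_graph L top|)%N.
Proof.
move=> I0; have k0 : (0 < k)%N by lia.
have ck (c : 'I_2) : (c.+1 < k)%N by have := ltn_ord c; lia.
pose f (x : 'I_m * ('I_2 * 'I_m)) := (core 0 x.1, core x.2.1.+1 x.2.2).
have -> : (2 * (m * m) = #|{: 'I_m * ('I_2 * 'I_m)}|)%N by rewrite !card_prod !card_ord; lia.
apply: (@leq_card_into _ _ f).
  move=> [a [c b]] [a' [c' b']] [/core_inj a_eq /core_inj cb_eq].
  have [_ /val_inj->] := a_eq k0 k0 (ltn_ord a) (ltn_ord a').
  by have [[/val_inj->] /val_inj->] := cb_eq (ck c) (ck c') (ltn_ord b) (ltn_ord b').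
move=> [a [c b]]; apply/mem_cg_edges; split=> /=.
- by rewrite !val_core ?ck //; have := ltn_ord a; nia.
- exact: not_covered_init.
- by apply: (@top_on_sp_cores _ _ 0 c.+1); rewrite ?vkind_core ?ck.
Qed.

Lemma whhl_first_choice L v : whhl_inv gap_graph L set0 ->
  (forall v', v' \notin set0 -> cg_density gap_graph L v' <= cg_density gap_graph L v) ->
  v = top.
Proof.
move=> I0 vmax; apply/eqP/negPn/negP => vT.
have Vn x := card_cg_verts_init x I0.
suff : cg_density gap_graph L v < cg_density gap_graph L top by rewrite ltNge vmax ?inE.
apply: cg_density_lt; rewrite ?Vn // ltn_pmul2r //.
have Ev : (#|cg_edges gap_graph L v| <= 2 * (k + 1) * n + m * m)%N.
  case vG: (is_gate (vkind v)).
    have /gatesP[j jk ->] : v \in gates by rewrite inE.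
    by apply: leq_trans (card_cg_edges_gate L jk) _; rewrite Vn; nia.
  by apply: leq_trans (card_cg_edges_nongate L vT (negbT vG)) _; rewrite Vn leq_addr.
by apply: leq_ltn_trans Ev _; apply: leq_trans (card_cg_edges_top_init I0); nia.
Qed.

Definition gate_phase (S : {set 'I_n}) := top \in S /\ S \subset top |: gates.

Lemma gate_phase_core S (u : 'I_n) j : gate_phase S -> vkind u = Core j -> u \notin S.
Proof.
case=> _ /subsetP S_sub uC; apply/negP => /S_sub.
by rewrite !inE uC => /orP[/eqP uT|//]; rewrite uT vkindT in uC.
Qed.

Lemma gate_phase_mid S : gate_phase S -> mid \notin S.
Proof.
case=> _ /subsetP S_sub; apply/negP => /S_sub.
by rewrite !inE vkindM orbF => /eqP mT; have := vkindM; rewrite mT vkindT.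
Qed.

Lemma core_pair_uncovered L S (x y : 'I_n) j :
  whhl_inv gap_graph L S -> gate_phase S -> gate j \notin S ->
  vkind x = Core j -> vkind y = Core j -> x != y -> ~ covered gap_graph L x y.
Proof.
case=> _ coverE GP gS xC yC xy /coverE[s sS /(on_sp_core_pair xC yC xy)[] sE];
  move: sS; rewrite sE; apply/negP; [exact: gate_phase_core xC | exact: gate_phase_core yC | by []].
Qed.

(* The pairs with one end in each half of core [j] are uncovered while gate [j]
   is not selected. *)
Lemma card_cg_edges_gate_phase L S j :
  whhl_inv gap_graph L S -> gate_phase S -> (j < k)%N -> gate j \notin S ->
  (h * h <= #|cg_edges gap_graph L (gate j)|)%N.
Proof.
move=> I GP jk gS.
have lo (a : 'I_h) : (a < m)%N by have := ltn_ord a; lia.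
have hi (b : 'I_h) : (h + b < m)%N by have := ltn_ord b; lia.
pose f (x : 'I_h * 'I_h) := (core j x.1, core j (h + x.2)).
have -> : (h * h = #|{: 'I_h * 'I_h}|)%N by rewrite card_prod !card_ord.
apply: (@leq_card_into _ _ f).
  move=> [a b] [a' b'] [/core_inj a_eq /core_inj b_eq].
  have [_ /val_inj->] := a_eq jk jk (lo a) (lo a').
  by have [_ /addnI/val_inj->] := b_eq jk jk (hi b) (hi b').
move=> [a b] /=; have aC := vkind_core jk (lo a); have bC := vkind_core jk (hi b).
have ab : core j a != core j (h + b).
  by apply/eqP => /(core_inj jk jk (lo a) (hi b))[_]; have := ltn_ord a; lia.
apply/mem_cg_edges; split=> /=; last exact: gate_on_sp_core.
- by rewrite !val_core ?lo ?hi //; have := ltn_ord a; lia.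
- exact: core_pair_uncovered I GP gS aC bC ab.
Qed.

(* Every core vertex [u] is a vertex of the center graph: [u] and gate [j] can
   only be covered by [u], gate [j] or [mid]. *)
Lemma card_cg_verts_gate_phase L S j :
  whhl_inv gap_graph L S -> gate_phase S -> (j < k)%N -> gate j \notin S ->
  (k * m <= #|cg_verts gap_graph L (gate j)|)%N.
Proof.
move=> [_ coverE] GP jk gS.
pose f (x : 'I_k * 'I_m) := core x.1 x.2.
have card_km : #|{: 'I_k * 'I_m}| = (k * m)%N by rewrite card_prod !card_ord.
rewrite -[X in (X <= _)%N]card_km.
apply: (@leq_card_into _ _ f).
  move=> [a b] [a' b'] /(core_inj (ltn_ord a) (ltn_ord a') (ltn_ord b) (ltn_ord b')).
  by case=> /val_inj-> /val_inj->.
move=> [a b]; have uC := vkind_core (ltn_ord a) (ltn_ord b).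
apply/mem_cg_verts; exists (gate j); split; last exact: on_sp_gap_target.
move/coverE=> [s sS /(on_sp_core_gate jk uC)[] sE]; move: sS; rewrite sE; apply/negP.
- exact: gate_phase_core uC.
- exact: gS.
- exact: gate_phase_mid.
Qed.

Lemma whhl_gate_choice L S (v : 'I_n) j :
  whhl_inv gap_graph L S -> gate_phase S -> (j < k)%N -> gate j \notin S -> v \notin S ->
  cg_density gap_graph L (gate j) <= cg_density gap_graph L v -> is_gate (vkind v).
Proof.
move=> I GP jk gS vS; apply: contraTT => vG; rewrite -ltNge.
have Eg := card_cg_edges_gate_phase I GP jk gS.
have Vg : (0 < #|cg_verts gap_graph L (gate j)|)%N.
  by apply: (cg_verts_gt0 on_sp_gap_sym); apply: leq_trans Eg; rewrite muln_gt0 h_gt0.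
have [Vv0|Vv] := posnP #|cg_verts gap_graph L v|.
  by rewrite /cg_density Vv0 invr0 mulr0 divr_gt0 ?ltr0n // (leq_trans _ Eg) ?muln_gt0 ?h_gt0.
have vT : v != top by apply: contraNneq vS => ->; case: GP.
apply: cg_density_lt => //.
have Vg_le : (#|cg_verts gap_graph L (gate j)| <= n)%N.
  by apply: leq_trans (max_card _) _; rewrite card_ord.
apply: (@leq_ltn_trans (2 * (k + 1) * n * #|cg_verts gap_graph L v|)).
  by rewrite mulnAC leq_mul ?card_cg_edges_nongate.
apply: (@leq_trans (h * h * #|cg_verts gap_graph L v|)); first by rewrite ltn_pmul2r.
by rewrite leq_mul2r Eg orbT.
Qed.

(* w-HHL first selects [top], then all the gates, each of which enlarges the
   labels of at least [k * m] vertices. *)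
Lemma whhl_reach_phases L S : whhl_reach gap_graph L S ->
  [\/ S = set0,
      gate_phase S /\ (#|S :&: gates| * (k * m) <= hl_size L)%N
    | gates \subset S /\ (k * (k * m) <= hl_size L)%N].
Proof.
elim=> [|{}L {}S v LSr IH _ vS vmax]; first exact: Or31.
have I := whhl_reach_inv on_sp_gap_sym LSr.
rewrite (hl_size_whhl_update I vS).
case: IH => [S0|[GP size_le]|[gS size_le]]; last first.
- by apply: Or33; rewrite (subset_trans gS (subsetU1 _ _)) (leq_trans size_le) ?leq_addr.
- have [gS|/subsetPn[_ /gatesP[j jk ->] gS]] := boolP (gates \subset S).
    apply: Or33; rewrite (subset_trans gS (subsetU1 _ _)).
    by rewrite -{1}card_gates -(setIidPr gS) (leq_trans size_le) ?leq_addr.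
  have /gatesP[j' j'k vE] : v \in gates.
    by rewrite inE (whhl_gate_choice I GP jk gS vS (vmax _ gS)).
  have [tS S_sub] := GP; apply: Or32; split.
    by split; rewrite ?inE ?tS ?orbT // subUset S_sub sub1set !inE vE vkindG ?orbT.
  have -> : (v |: S) :&: gates = v |: (S :&: gates).
    by rewrite setIUl (setIidPl _) // sub1set inE vE vkindG.
  rewrite cardsU1 inE (negbTE vS) /= add1n mulSn addnC leq_add //.
  by rewrite vE (card_cg_verts_gate_phase I GP j'k) // -vE.
- subst S; rewrite (whhl_first_choice I vmax); apply: Or32; split.
    by split; rewrite ?setU11 // setU0 sub1set setU11.
  suff -> : (top |: set0) :&: gates = set0 by rewrite cards0.
  by apply/setP => x; rewrite !inE; case: eqP => // ->; rewrite vkindT.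
Qed.

Lemma whhl_output_size L : whhl_output gap_graph L -> (k * (k * m) <= hl_size L)%N.
Proof.
case=> S [LSr HL]; have I := whhl_reach_inv on_sp_gap_sym LSr.
case: (whhl_reach_phases LSr) => [S0|[GP size_le]|[_ //]].
  by subst S; have [] := not_covered_init I (HL top top).
have [gS|/subsetPn[_ /gatesP[j jk ->] gS]] := boolP (gates \subset S).
  by rewrite -{1}card_gates -(setIidPr gS).
have m1 : (1 < m)%N by have := h_gt0; lia.
have c0 := vkind_core jk (ltnW m1); have c1 := vkind_core jk m1.
have c01 : core j 0 != core j 1 by apply/eqP => /(core_inj jk jk (ltnW m1) m1)[].
by have [] := core_pair_uncovered I GP gS c0 c1 c01 (HL _ _).
Qed.

Definition opt_labels : labeling n := fun u =>
  match vkind u with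
  | Top => [set top]
  | Mid => [set mid; top]
  | Gate _ => [set u; top; mid]
  | Core j => [set u; top; mid; gate j]
  end.

Lemma opt_labels_self (u : 'I_n) : u \in opt_labels u.
Proof.
rewrite /opt_labels; case uK: (vkind u) => [||j|j]; rewrite !inE ?eqxx //.
- by rewrite (vkind_eq_top uK).
- by rewrite (vkind_eq_mid uK) eqxx.
Qed.

Lemma opt_labels_top (u : 'I_n) : top \in opt_labels u.
Proof. by rewrite /opt_labels; case: (vkind u) => [||j|j]; rewrite !inE eqxx ?orbT. Qed.

Lemma opt_labels_mid (u : 'I_n) : u != top -> mid \in opt_labels u.
Proof.
rewrite /opt_labels; case uK: (vkind u) => [||j|j]; rewrite !inE ?eqxx ?orbT //.
by rewrite (vkind_eq_top uK) eqxx.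
Qed.

Lemma opt_labels_gate (u : 'I_n) j : vkind u = Core j -> gate j \in opt_labels u.
Proof. by move=> uC; rewrite /opt_labels uC !inE eqxx ?orbT. Qed.

Lemma hl_size_opt_labels : (hl_size opt_labels <= 4 * n)%N.
Proof.
rewrite /hl_size; apply: leq_trans (_ : (\sum_(u : 'I_n) 4 <= _)%N); last first.
  by rewrite sum_nat_const card_ord mulnC.
apply: leq_sum => u _; set x := if vkind u is Core j then gate j else top.
apply: leq_trans (card_size [:: u; top; mid; x]); apply/subset_leq_card/subsetP => y.
by rewrite /opt_labels /x; case: (vkind u) => [||j|j]; rewrite !inE;
  do ![case/orP|move/eqP->]; rewrite ?eqxx ?orbT.
Qed.

Lemma covered_opt_labels (u x w : 'I_n) : x \in opt_labels u -> x \in opt_labels w ->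
  on_sp gap_graph u x w -> covered gap_graph opt_labels u w.
Proof. by move=> xu xw xP; exists x; rewrite ?inE ?xu. Qed.

Lemma opt_labels_HL : is_HL gap_graph opt_labels.
Proof.
move=> u w; have srcT := on_sp_gap_source; have tgtT := on_sp_gap_target.
have via := covered_opt_labels.
have [<-|uw] := eqVneq u w; first exact: via (opt_labels_self u) (opt_labels_self u) (srcT _ _).
have [->|uT] := eqVneq u top; first exact: via (opt_labels_top _) (opt_labels_top _) (srcT _ _).
have [->|wT] := eqVneq w top; first exact: via (opt_labels_top _) (opt_labels_top _) (tgtT _ _).
have [->|uM] := eqVneq u mid; first exact: via (opt_labels_self _) (opt_labels_mid wT) (srcT _ _).
have [->|wM] := eqVneq w mid; first exact: via (opt_labels_mid uT) (opt_labels_self _) (tgtT _ _).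
have via_mid := covered_opt_labels (opt_labels_mid uT) (opt_labels_mid wT).
have := vkind_ok u; have := vkind_ok w.
case uK: (vkind u) => [||i|i];
  [by rewrite (vkind_eq_top uK) eqxx in uT | by rewrite (vkind_eq_mid uK) eqxx in uM | |].
all: case wK: (vkind w) => [||j|j];
  [by rewrite (vkind_eq_top wK) eqxx in wT | by rewrite (vkind_eq_mid wK) eqxx in wM | |].
all: move=> /= jk ik.
- apply/via_mid; rewrite (vkind_eq_gate uK) (vkind_eq_gate wK); apply: mid_on_sp_gates => //.
  by apply: contraNneq uw => ij; rewrite (vkind_eq_gate uK) (vkind_eq_gate wK) ij.
- have [ij|ij] := eqVneq i j.
    rewrite (vkind_eq_gate uK) ij.
    exact: via (opt_labels_self _) (opt_labels_gate wK) (srcT _ _).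
  apply/via_mid/on_sp_gap_sym; rewrite (vkind_eq_gate uK).
  by apply: (mid_on_sp_core_gate ik wK); rewrite eq_sym.
- have [ij|ij] := eqVneq i j.
    rewrite (vkind_eq_gate wK) -ij.
    exact: via (opt_labels_gate uK) (opt_labels_self _) (tgtT _ _).
  by apply/via_mid; rewrite (vkind_eq_gate wK); apply: (mid_on_sp_core_gate jk uK).
- have [ij|ij] := eqVneq i j; last first.
    exact: via (opt_labels_top _) (opt_labels_top _) (top_on_sp_cores uK wK ij).
  rewrite ij in uK ik *.
  exact: via (opt_labels_gate uK) (opt_labels_gate wK) (gate_on_sp_core ik uK wK uw).
Qed.

Lemma opt_labels_rank (u v : 'I_n) : u \in opt_labels v -> (u <= v)%N.
Proof.
have top0 : top = 0%N :> nat by rewrite /= inordK.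
have mid1 : mid = 1%N :> nat by rewrite /= inordK.
have := vkind_ok v; rewrite /opt_labels; case vK: (vkind v) => [||j|j] /= jk; rewrite !inE.
- by move/eqP->; rewrite top0.
- by move=> /orP[]/eqP->; rewrite ?top0 ?(vkind_eq_mid vK) ?mid1.
- have v2 : (2 <= v)%N by move: vK; rewrite /vkind; do 2!case: eqP => //; lia.
  by do ![case/orP | move/eqP->]; rewrite ?top0 ?mid1; lia.
- have vk := vkind_core_ge vK; have gate_j : gate j = j.+2 :> nat by rewrite /= inordK //; lia.
  by do ![case/orP | move/eqP->]; rewrite ?top0 ?mid1 ?gate_j //; lia.
Qed.

Lemma opt_labels_HHL : is_HHL gap_graph opt_labels.
Proof.
split; first exact: opt_labels_HL.
by exists id; split; [exists id | exact: opt_labels_rank].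
Qed.

End Construction.

Lemma quartic_le_cubic (a n s : nat) :
  (n <= 2 ^ 5 * a ^ 3)%N -> (2 ^ 4 * a ^ 4 <= s)%N -> (n ^ 4 <= 2 ^ 8 * s ^ 3)%N.
Proof.
move=> n_le s_ge; apply: (@leq_trans ((2 ^ 5 * a ^ 3) ^ 4)%N); first by rewrite leq_exp2r.
have -> : ((2 ^ 5 * a ^ 3) ^ 4 = 2 ^ 8 * (2 ^ 4 * a ^ 4) ^ 3)%N.
  by rewrite !(expnMn (2 ^ _)) -!expnM mulnA -expnD.
by rewrite leq_mul2l leq_exp2r.
Qed.

Theorem mainTheorem9 :
  exists (c C : rat), 0 < c /\
  forall N : nat, exists (n : nat) (G : wgraph n),
    [/\ (N <= n)%N, wf_graph G, connected_graph G,
        (exists L, is_HHL G L /\ (hl_size L)%:R <= C * n%:R) &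
        (exists L, whhl_output G L)] /\
        forall L, whhl_output G L -> c * n%:R ^+ 4 <= (hl_size L)%:R ^+ 3.
Proof.
exists (2 ^ 8)%N%:R^-1, 4%:R; split=> [|N]; first by rewrite invr_gt0 ltr0n.
have [k [Nk k_ge3]] : exists k, (N <= k)%N /\ (2 < k)%N by exists N.+3; lia.
have [h hE] : {h | h = (2 ^ 3 * k ^ 2)%N} by exists (2 ^ 3 * k ^ 2)%N.
have h_large : (2 * (k + 1) * (k + k * (2 * h)).+2 < h * h)%N by rewrite hE; nia.
exists (k + k * (2 * h)).+2, (gap_graph k h); split.
  split; [lia | exact: gap_graph_wf | exact: (gap_graph_connected k_ge3 h_large) | |].
    exists (@opt_labels k h); split; first exact: (opt_labels_HHL k_ge3 h_large).
    by rewrite -natrM ler_nat hl_size_opt_labels.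
  exact: whhl_output_exists (on_sp_gap_sym k_ge3 h_large) (on_sp_gap_source k_ge3 h_large).
move=> L /(whhl_output_size k_ge3 h_large) size_ge.
rewrite ler_pdivrMl; last by rewrite ltr0n expn_gt0.
rewrite -!natrX -natrM ler_nat.
apply: (quartic_le_cubic (a := k)); first by rewrite hE; nia.
by apply: leq_trans size_ge; rewrite hE; nia.
Qed.
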